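(* Let $G$ be a finite connected graph with a real structure, let $D_1,D_2$ be real divisors on $G$ and let $f:V(G)\to\mathbb Z$ satisfy $\Delta(f)=D_1-D_2$. Then $\overline f=f$, where $\overline f(v)=f(\overline v)$.
   Context: A finite graph $G$ has vertex set $V(G)$, edge set $E(G)$ and incidence function $\psi$ assigning to each edge a set of one or two vertices (loops and multiple edges allowed). A real structure on $G$ is a pair of involutions of $V(G)$ and $E(G)$, written $v\mapsto\overline v$, $e\mapsto\overline e$, with $\psi(\overline e)=\overline{\psi(e)}$. A divisor is a formal $\mathbb Z$-linear combination $D=\sum_v D(v)v$ of vertices; its conjugate is $\overline D(v)=D(\overline v)$, and $D$ is real if $\overline D=D$. For $f:V(G)\to\mathbb Z$, $\Delta(f)(v)=\sum_{e\in E(G),\,\psi(e)=\{v,w\}}(f(w)-f(v))$. *)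

From mathcomp Require Import all_boot all_order all_algebra.
Set Implicit Arguments. Unset Strict Implicit. Unset Printing Implicit Defensive.
Import Order.TTheory GRing.Theory Num.Theory.
Local Open Scope ring_scope.

(* A finite graph: vertices V, edges E (finite types), incidence psi assigning
   to each edge a set of one or two vertices (loops / multi-edges allowed). *)
Definition is_incidence (V E : finType) (psi : E -> {set V}) : Prop :=
  forall e, (0 < #|psi e| <= 2)%N.

Definition adj (V E : finType) (psi : E -> {set V}) : rel V :=
  fun u w => [exists e, psi e == [set u; w]].

Definition graph_connected (V E : finType) (psi : E -> {set V}) : Prop :=
  forall u w : V, connect (adj psi) u w.

Definition real_structure (V E : finType) (psi : E -> {set V})
    (cv : V -> V) (ce : E -> E) : Prop :=
  involutive cv /\ involutive ce /\ forall e, psi (ce e) = cv @: psi e.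

Definition real_divisor (V : finType) (cv : V -> V) (D : V -> int) : Prop :=
  forall v, D (cv v) = D v.

(* Laplacian: Delta(f)(v) = sum over edges e with psi(e) = {v,w} of f(w)-f(v).
   For each edge e, at most one w satisfies psi e = {v,w} unless it is a loop,
   where w = v and the contribution is 0. *)
Definition laplacian (V E : finType) (psi : E -> {set V}) (f : V -> int)
    (v : V) : int :=
  \sum_(e : E) \sum_(w : V | psi e == [set v; w]) (f w - f v).

From mathcomp Require Import all_boot all_order all_algebra.
From mathcomp Require Import zify.
Set Implicit Arguments. Unset Strict Implicit. Unset Printing Implicit Defensive.
Import Order.TTheory GRing.Theory Num.Theory.
Local Open Scope ring_scope.

(* The real structure is a graph automorphism, so conjugation commutes with
   the Laplacian; hence [fbar - f] is harmonic, since [Delta f] is real. On a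
   connected graph a harmonic function is constant (maximum principle), and
   [fbar - f] changes sign under conjugation, so this constant is [0]. *)

Section Laplacian.

Variables (V E : finType) (psi : E -> {set V}).

Lemma adjC : symmetric (adj psi).
Proof. by move=> x y; apply: eq_existsb => e; rewrite setUC. Qed.

Lemma laplacianB (f g : V -> int) v :
  laplacian psi (fun x => f x - g x) v = laplacian psi f v - laplacian psi g v.
Proof.
rewrite /laplacian -sumrB; apply: eq_bigr => e _.
by rewrite -sumrB; apply: eq_bigr => w _; lia.
Qed.

Lemma laplacian_conj (cv : V -> V) (ce : E -> E) (f : V -> int) v :
  real_structure psi cv ce ->
  laplacian psi (fun x => f (cv x)) v = laplacian psi f (cv v).
Proof.
move=> [cvK [ceK psi_ce]]; have cv_inj : injective cv := can_inj cvK.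
rewrite /laplacian [RHS](reindex_inj (can_inj ceK)) /=.
apply: eq_bigr => e _; rewrite [RHS](reindex_inj cv_inj) /=.
apply: eq_bigl => w.
by rewrite psi_ce -!imset_set1 -imsetU (inj_eq (imset_inj cv_inj)).
Qed.

Lemma harmonic_max_adj (g : V -> int) x y :
  (forall z, g z <= g x) -> laplacian psi g x = 0 -> adj psi x y -> g y = g x.
Proof.
move=> g_max harm /existsP[e /eqP psi_e].
have term_ge0 (p : E * V) : psi p.1 == [set x; p.2] -> 0 <= g x - g p.2.
  by rewrite subr_ge0.
have sum_terms0 : \sum_(p | psi p.1 == [set x; p.2]) (g x - g p.2) = 0.
  transitivity (- laplacian psi g x); last by rewrite harm oppr0.
  rewrite /laplacian pair_big_dep -sumrN /=.
  by apply: eq_bigr => p _; rewrite opprB.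
apply/eqP; rewrite eq_sym -subr_eq0; apply/eqP.
by apply: (psumr_eq0P term_ge0 sum_terms0 (i := (e, y))); rewrite psi_e eqxx.
Qed.

Lemma harmonic_connected_const (g : V -> int) :
  graph_connected psi -> (forall v, laplacian psi g v = 0) ->
  forall u w, g u = g w.
Proof.
move=> conn harm u w.
have [m _ g_max] := @arg_maxP _ _ _ u predT g isT.
have max_closed : closed (adj psi) [pred x | g x == g m].
  have step x y : adj psi x y -> g x = g m -> g y = g m.
    move=> xy gx; rewrite -gx; apply: harmonic_max_adj => // z.
    by rewrite gx; apply: g_max.
  by move=> x y xy /=; apply/eqP/eqP; apply: step; rewrite // adjC.
have := closed_connect max_closed (conn m u).
have := closed_connect max_closed (conn m w).
by rewrite !inE eqxx => /esym/eqP -> /esym/eqP ->.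
Qed.

End Laplacian.

Theorem lemma1 (V E : finType) (psi : E -> {set V})
    (cv : V -> V) (ce : E -> E) (D1 D2 : V -> int) (f : V -> int) :
  is_incidence psi ->
  graph_connected psi ->
  real_structure psi cv ce ->
  real_divisor cv D1 -> real_divisor cv D2 ->
  (forall v, laplacian psi f v = D1 v - D2 v) ->
  forall v, f (cv v) = f v.
Proof.
move=> _ conn real D1_real D2_real lap_f v.
have cvK : involutive cv by case: real.
pose g x := f (cv x) - f x.
have harm_g x : laplacian psi g x = 0.
  by rewrite laplacianB (laplacian_conj f x real) !lap_f D1_real D2_real subrr.
have := harmonic_connected_const conn harm_g (cv v) v.
rewrite /g cvK; lia.
Qed.
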